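(* Let $G=(V,E)$ be a finite connected simple graph with boundary $\delta V\subseteq V$ and rotation $\rho=(\rho_u)_{u\in V}$, let $G^{BU}$ be its blow-up graph with tails, and let $U$ be the facial quantum walk on $\mathbb{C}^{A^{BU}\cup A_{tl}}$ with coin $H=\begin{pmatrix}a&b\\c&d\end{pmatrix}$, where $H$ is unitary, $abcd\neq 0$ and $d\in\mathbb{R}$; put $\omega=-\det H$ (all as defined in the context). Let $\Psi\in\mathbb{C}^{A^{BU}\cup A_{tl}}$ satisfy $U\Psi=\Psi$ and let $\psi$ be its restriction to $A^{BU}$. Let $u,u'\in V$ be adjacent in $G$, let $e_{br}\in A_{br}$ be the bridge arc from $(u,u')$ to $(u',u)$, and let $e_{is},\epsilon_{is}\in A_{is}(u)$ and $e'_{is},\epsilon'_{is}\in A_{is}(u')$ be the island arcs with $t(e_{is})=o(e_{br})=o(\epsilon_{is})$ and $t(e'_{is})=t(e_{br})=o(\epsilon'_{is})$. Then $$\psi(\epsilon_{is})=\omega\,\psi(e'_{is}),\qquad \psi(\epsilon'_{is})=\omega\,\psi(e_{is}),$$ and $$\psi(e_{br})=\frac{\omega}{b}\bigl(\psi(e_{is})+d\,\psi(e'_{is})\bigr),\qquad \psi(\bar e_{br})=\frac{\omega}{b}\bigl(\psi(e'_{is})+d\,\psi(e_{is})\bigr).$$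
   Context: Setting. $G=(V,E)$ is a finite connected simple graph and $\delta V\subseteq V$ a set of boundary vertices. To each $u\in\delta V$ a semi-infinite path (tail) is attached with origin $u$; let $\tau_u$ be the neighbour of $u$ on its tail. Let $\tilde N_u$ be the set of neighbours of $u$ in $G$, together with $\tau_u$ if $u\in\delta V$. A rotation is a family $\rho=(\rho_u)_{u\in V}$, where $\rho_u$ is a cyclic permutation of $\tilde N_u$ of length $|\tilde N_u|$. Blow-up graph. $V^{BU}=\{(u,v):u\in V,\ v\in\tilde N_u\}$. The arc set is $A^{BU}=A_{is}\sqcup A_{br}$: the island arcs $A_{is}$ are the arcs $(u,v)\to(u,\rho_u(v))$; the bridge arcs $A_{br}$ are the arcs $(u,v)\to(v,u)$ for $u,v\in V$ adjacent in $G$. For $e\in A_{br}$, $\bar e$ denotes the reverse bridge arc. $A_{is}(u)$ is the set of island arcs whose endpoints have first coordinate $u$. For an arc $e$, $o(e)$ and $t(e)$ denote its origin and terminus. Let $\delta V^{BU}=\{(u,\tau_u):u\in\delta V\}$. To each $x\in\delta V^{BU}$ a tail is attached: incoming arcs $e^x_0,e^x_1,\dots$ with $t(e^x_0)=x$ and $t(e^x_{j+1})=o(e^x_j)$, and their reverses $\bar e^x_0,\bar e^x_1,\dots$ (outgoing). $A_{tl}$ is the set of all tail arcs. Each $x\in V^{BU}$ has exactly one incoming and one outgoing island arc, and exactly one further incoming and one further outgoing arc (a bridge arc and its reverse if $x\notin\delta V^{BU}$; the tail arcs $e^x_0$ and $\bar e^x_0$ if $x\in\delta V^{BU}$). Facial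 quantum walk. $U$ acts on $\mathbb{C}^{A^{BU}\cup A_{tl}}$ by $(U\Psi)(e^x_j)=\Psi(e^x_{j+1})$ and $(U\Psi)(\bar e^x_{j+1})=\Psi(\bar e^x_j)$ for all $j\ge 0$ and $x\in\delta V^{BU}$. At every $x\in V^{BU}$, writing $e^{is}_+$ and $e^{br}_+$ for the incoming island and non-island arcs, and $e^{is}_-$ and $e^{br}_-$ for the outgoing island and non-island arcs, $$\begin{pmatrix}(U\Psi)(e^{is}_-)\\(U\Psi)(e^{br}_-)\end{pmatrix}=H\begin{pmatrix}\Psi(e^{is}_+)\\ \Psi(e^{br}_+)\end{pmatrix}.$$ *)

From HB Require Import structures.
From mathcomp Require Import all_boot all_order all_algebra all_fingroup.
From mathcomp Require Import reals.
From mathcomp.real_closed Require Import complex.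
Set Implicit Arguments. Unset Strict Implicit. Unset Printing Implicit Defensive.
Import Order.TTheory GRing.Theory Num.Theory.
Local Open Scope ring_scope.

(* The extended neighbourhood  ~N_u  is encoded in [option V]:         *)
(*   Some v  <-> the neighbour v of u in G,                            *)
(*   None    <-> the tail neighbour tau_u (only present if u \in dV).  *)

Definition simple_graph (V : finType) (adj : rel V) : Prop :=
  symmetric adj /\ irreflexive adj.

Definition connected_graph (V : finType) (adj : rel V) : Prop :=
  forall u v : V, connect adj u v.

Definition Nt (V : finType) (adj : rel V) (dV : {set V}) (u : V) : pred (option V) :=
  fun y => match y with Some v => adj u v | None => u \in dV end.

(* rho_u is a cyclic permutation of ~N_u of length |~N_u|: it acts only  *)
(* on ~N_u and ~N_u is a single orbit of rho_u.                          *)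
Definition rotation (V : finType) (adj : rel V) (dV : {set V})
    (rho : V -> {perm option V}) : Prop :=
  forall u : V,
    perm_on [set y | Nt adj dV u y] (rho u) /\
    (forall y z, Nt adj dV u y -> Nt adj dV u z ->
       exists k : nat, ((rho u) ^+ k)%g y = z).

(*   Island u y  : (u,y) -> (u, rho_u y)        (y \in ~N_u)            *)
(*   Bridge u v  : (u,v) -> (v,u)               (u,v adjacent)          *)
(*   TailIn u j  : e^x_j,  x = (u,tau_u)        (u \in dV)              *)
(*   TailOut u j : \bar e^x_j                   (u \in dV)              *)
(* Blow-up vertices are pairs (u,y) : V * option V with y \in ~N_u.     *)

Inductive Arc (V : Type) : Type :=
  | Island of V & option V
  | Bridge of V & V
  | TailIn of V & nat
  | TailOut of V & nat.

Section BlowUp.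
Variables (V : finType) (adj : rel V) (dV : {set V}) (rho : V -> {perm option V}).

Definition valid_arc (a : Arc V) : bool :=
  match a with
  | Island u y => Nt adj dV u y
  | Bridge u v => adj u v
  | TailIn u _ => u \in dV
  | TailOut u _ => u \in dV
  end.

Definition in_Ais (u : V) (a : Arc V) : bool :=
  match a with Island w y => (w == u) && Nt adj dV w y | _ => false end.

(* origin / terminus, when they are vertices of the blow-up graph *)
Definition orig (a : Arc V) : option (V * option V) :=
  match a with
  | Island u y => Some (u, y)
  | Bridge u v => Some (u, Some v)
  | TailIn _ _ => None
  | TailOut u j => if j is 0 then Some (u, None) else None
  end.

Definition term (a : Arc V) : option (V * option V) :=
  match a with
  | Island u y => Some (u, rho u y)
  | Bridge u v => Some (v, Some u)
  | TailIn u j => if j is 0 then Some (u, None) else None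
  | TailOut _ _ => None
  end.

Definition in_nonisland (u : V) (y : option V) : Arc V :=
  match y with Some v => Bridge v u | None => TailIn u 0 end.

Variable C : numClosedFieldType.
Variable H : 'M[C]_2.

Definition ca := H ord0 ord0.
Definition cb := H ord0 ord_max.
Definition cc := H ord_max ord0.
Definition cd := H ord_max ord_max.

(* At the blow-up vertex x = (u,y) the incoming island arc is
   Island u (rho_u^-1 y), the incoming non-island arc is in_nonisland u y,
   the outgoing island arc is Island u y and the outgoing non-island arc
   is Bridge u v (y = Some v) or TailOut u 0 (y = None).  *)
Definition walkU (Psi : Arc V -> C) (a : Arc V) : C :=
  match a with
  | Island u y =>
      ca * Psi (Island u (((rho u)^-1)%g y)) + cb * Psi (in_nonisland u y)
  | Bridge u v =>
      cc * Psi (Island u (((rho u)^-1)%g (Some v))) + cd * Psi (Bridge v u)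
  | TailOut u 0 =>
      cc * Psi (Island u (((rho u)^-1)%g None)) + cd * Psi (TailIn u 0)
  | TailOut u j.+1 => Psi (TailOut u j)
  | TailIn u j => Psi (TailIn u j.+1)
  end.

End BlowUp.

Definition unitary_mx (C : numClosedFieldType) (n : nat) (M : 'M[C]_n) : Prop :=
  M *m (map_mx Num.conj M)^T = 1%:M.

From HB Require Import structures.
From mathcomp Require Import all_boot all_order all_algebra all_fingroup.
From mathcomp Require Import reals.
From mathcomp.real_closed Require Import complex.
From mathcomp Require Import ring.
Set Implicit Arguments. Unset Strict Implicit. Unset Printing Implicit Defensive.
Import Order.TTheory GRing.Theory Num.Theory.
Local Open Scope ring_scope.

(* The four fixed-point equations of U at the two blow-up vertices (u,u')
   and (u',u) involve only the six values of Psi on the arcs around the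
   bridge, and form a linear system whose coefficients are the entries of H.
   Since H is unitary with d real, omega = -det H satisfies omega d = -a and
   omega (1 - d^2) = b c, and these two relations solve the system. *)

Lemma det_mx2 (R : comNzRingType) (A : 'M[R]_2) :
  \det A = A ord0 ord0 * A ord_max ord_max - A ord0 ord_max * A ord_max ord0.
Proof.
have lift01 : lift ord0 ord0 = ord_max :> 'I_2 by exact: val_inj.
have lift10 : lift ord_max ord0 = ord0 :> 'I_2 by exact: val_inj.
rewrite (expand_det_row _ ord0) !big_ord_recl big_ord0 /cofactor !det_mx11 !mxE /=.
by rewrite !lift01 lift10 expr0 expr1; ring.
Qed.

Section EdgeSystem.

Variables (F : fieldType) (a b c d w : F).
Hypotheses (w_mul_d : w * d = - a) (w_mul_1subd2 : w * (1 - d ^+ 2) = b * c).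
Hypothesis bc_neq0 : b * c != 0.

Lemma edge_bridge_value (e e' B B' : F) :
  B = c * e + d * B' -> B' = c * e' + d * B -> B = w / b * (e + d * e').
Proof.
move=> defB defB'.
have k_neq0 : 1 - d ^+ 2 != 0.
  by apply: contraNneq bc_neq0 => k0; rewrite -w_mul_1subd2 k0 mulr0.
have b_neq0 : b != 0 by apply: contraNneq bc_neq0 => ->; rewrite mul0r.
have kB : (1 - d ^+ 2) * B = c * (e + d * e').
  by rewrite mulrBl mul1r {1}defB defB'; ring.
apply: (mulfI k_neq0); rewrite kB.
have -> : (1 - d ^+ 2) * (w / b * (e + d * e')) =
          w * (1 - d ^+ 2) / b * (e + d * e') by ring.
by rewrite w_mul_1subd2 [b * c]mulrC mulfK.
Qed.

Lemma edge_island_value (e e' B eps' : F) :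
  eps' = a * e' + b * B -> B = w / b * (e + d * e') -> eps' = w * e.
Proof.
have b_neq0 : b != 0 by apply: contraNneq bc_neq0 => ->; rewrite mul0r.
move=> -> ->; rewrite mulrA mulrCA divff // mulr1 mulrDr mulrA w_mul_d.
by ring.
Qed.

Lemma edge_fixpoint_solution (e e' B B' eps eps' : F) :
  eps = a * e + b * B' -> B = c * e + d * B' ->
  eps' = a * e' + b * B -> B' = c * e' + d * B ->
  [/\ eps = w * e', eps' = w * e,
      B = w / b * (e + d * e') & B' = w / b * (e' + d * e)].
Proof.
move=> defeps defB defeps' defB'.
have valB := edge_bridge_value defB defB'.
have valB' := edge_bridge_value defB' defB.
by split; [apply: edge_island_value valB' | apply: edge_island_value valB |..].
Qed.

End EdgeSystem.

Section UnitaryCoin.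

Variables (C : numClosedFieldType) (H : 'M[C]_2).
Hypotheses (unitH : unitary_mx H) (cd_real : cd H \is Num.real).

Lemma det_coin : \det H = ca H * cd H - cb H * cc H.
Proof. by rewrite det_mx2. Qed.

Lemma unitary_coin_entry (i j : 'I_2) :
  H i ord0 * (H j ord0)^* + H i ord_max * (H j ord_max)^* = (i == j)%:R.
Proof.
move/matrixP/(_ i j): unitH; rewrite !mxE => <-.
have lift_max : lift ord0 ord0 = ord_max :> 'I_2 by exact: val_inj.
by rewrite big_ord_recl big_ord1 !mxE lift_max.
Qed.

Lemma unitary_coin_orthogonal : ca H * (cc H)^* + cb H * cd H = 0.
Proof. by rewrite -[cd H](conj_Creal cd_real) unitary_coin_entry. Qed.

Lemma unitary_coin_normalized : cc H * (cc H)^* + cd H ^+ 2 = 1.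
Proof.
by rewrite expr2 -{2}[cd H](conj_Creal cd_real) unitary_coin_entry.
Qed.

Lemma omega_mul_cd : - \det H * cd H = - ca H.
Proof.
have -> : - \det H * cd H = - ca H * (cc H * (cc H)^* + cd H ^+ 2)
                            + cc H * (ca H * (cc H)^* + cb H * cd H).
  by rewrite det_coin; ring.
by rewrite unitary_coin_orthogonal unitary_coin_normalized mulr1 mulr0 addr0.
Qed.

Lemma omega_mul_1subcd2 : - \det H * (1 - cd H ^+ 2) = cb H * cc H.
Proof. by rewrite mulrBr mulr1 expr2 mulrA omega_mul_cd det_coin; ring. Qed.

End UnitaryCoin.

Section IslandArcs.

Variables (V : finType) (adj : rel V) (dV : {set V}) (rho : V -> {perm option V}).

Lemma island_arc_from (u v : V) (e : Arc V) :
  in_Ais adj dV u e -> orig e = Some (u, Some v) -> e = Island u (Some v).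
Proof. by case: e => // w y /andP[/eqP-> _] [] ->. Qed.

Lemma island_arc_to (u v : V) (e : Arc V) :
  in_Ais adj dV u e -> term rho e = Some (u, Some v) ->
  e = Island u ((rho u)^-1%g (Some v)).
Proof. by case: e => // w y /andP[/eqP-> _] [] <-; rewrite permK. Qed.

Variables (C : numClosedFieldType) (H : 'M[C]_2) (Psi : Arc V -> C).
Hypothesis Psi_fixed :
  forall a, valid_arc adj dV a -> walkU rho H Psi a = Psi a.

Lemma fixed_island_out (u v : V) : adj u v ->
  Psi (Island u (Some v)) =
  ca H * Psi (Island u ((rho u)^-1%g (Some v))) + cb H * Psi (Bridge v u).
Proof. by move=> uv; rewrite -[LHS]Psi_fixed. Qed.

Lemma fixed_bridge (u v : V) : adj u v ->
  Psi (Bridge u v) =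
  cc H * Psi (Island u ((rho u)^-1%g (Some v))) + cd H * Psi (Bridge v u).
Proof. by move=> uv; rewrite -[LHS]Psi_fixed. Qed.

End IslandArcs.

Theorem mainTheorem1 (R : realType) (V : finType) (adj : rel V) (dV : {set V})
    (rho : V -> {perm option V}) (H : 'M[R[i]]_2)
    (Psi : Arc V -> R[i]) (u u' : V)
    (e_is eps_is e'_is eps'_is : Arc V) :
  simple_graph adj ->
  connected_graph adj ->
  rotation adj dV rho ->
  unitary_mx H ->
  ca H * cb H * cc H * cd H != 0 ->
  cd H \is Num.real ->
  (forall a, valid_arc adj dV a -> walkU rho H Psi a = Psi a) ->
  adj u u' ->
  in_Ais adj dV u e_is -> in_Ais adj dV u eps_is ->
  in_Ais adj dV u' e'_is -> in_Ais adj dV u' eps'_is ->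
  term rho e_is = orig (Bridge u u') ->
  orig (Bridge u u') = orig eps_is ->
  term rho e'_is = term rho (Bridge u u') ->
  term rho (Bridge u u') = orig eps'_is ->
  let omega := - \det H in
  [/\ Psi eps_is = omega * Psi e'_is,
      Psi eps'_is = omega * Psi e_is,
      Psi (Bridge u u') = omega / cb H * (Psi e_is + cd H * Psi e'_is)
    & Psi (Bridge u' u) = omega / cb H * (Psi e'_is + cd H * Psi e_is)].
Proof.
move=> [adj_sym _] _ _ unitH abcd_neq0 cd_real Psi_fixed uu' e_in eps_in e'_in
  eps'_in e_to eps_from e'_to eps'_from omega.
have u'u : adj u' u by rewrite adj_sym.
rewrite (island_arc_to e_in e_to) (island_arc_from eps_in (esym eps_from)).
rewrite (island_arc_to e'_in e'_to) (island_arc_from eps'_in (esym eps'_from)).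
have bc_neq0 : cb H * cc H != 0.
  by apply: contraNneq abcd_neq0 => bc0; rewrite -(mulrA (ca H)) bc0 mulr0 mul0r.
exact: (edge_fixpoint_solution (omega_mul_cd unitH cd_real)
  (omega_mul_1subcd2 unitH cd_real) bc_neq0
  (fixed_island_out Psi_fixed uu') (fixed_bridge Psi_fixed uu')
  (fixed_island_out Psi_fixed u'u) (fixed_bridge Psi_fixed u'u)).
Qed.
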